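(* Let $\gamma\in\{0\}\cup(0,\infty)\cup\{\infty\}$. The dual problem $$\sup_{q\in S^n_\infty,\ \rho^1,\rho^2\in[0,\gamma]^n}\ \sum_{x\in V}\min_{i\in I}\Big(C_i(x)+(\mathrm{div}_wq_i)(x)+\rho_i^2-\rho_i^1\Big)+\sum_{i=1}^n(\rho_i^1S_i^\ell-\rho_i^2S_i^u)$$ is equivalent to (has the same optimal value as) the max-flow problem $$\sup_{p_s,p,q,\rho^1,\rho^2}\ \sum_{x\in V}p_s(x)+\sum_{i=1}^n(\rho_i^1S_i^\ell-\rho_i^2S_i^u)$$ over $p_s:V\to\mathbb{R}$, $p_i:V\to\mathbb{R}$, $q_i:V\times V\to\mathbb{R}$, $\rho_i^1,\rho_i^2\in\mathbb{R}$, subject to, for all $i\in I$: $|q_i(x,y)|\le1$ for all $(x,y)$ with $\{x,y\}\in E$; $p_i(x)\le C_i(x)$ for all $x\in V$; $(\mathrm{div}_wq_i)(x)-p_s(x)+p_i(x)=\rho_i^1-\rho_i^2$ for all $x\in V$; and $0\le\rho_i^1,\rho_i^2\le\gamma$.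
   Context: Let $G=(V,E)$ be a finite undirected graph with symmetric weights $w(x,y)=w(y,x)>0$ for $\{x,y\}\in E$ and $w(x,y)=0$ otherwise. For $\phi:V\times V\to\mathbb{R}$, $(\mathrm{div}_w\phi)(x)=\frac12\sum_{y\in V}w(x,y)(\phi(x,y)-\phi(y,x))$ (so only values on ordered pairs $(x,y)$ with $\{x,y\}\in E$ matter), $\|\phi\|_\infty=\max_{x,y}|\phi(x,y)|$, and $S^n_\infty=\{(q_1,\dots,q_n):q_i:V\times V\to\mathbb{R},\ \|q_i\|_\infty\le1\}$. Let $n\ge2$, $I=\{1,\dots,n\}$, $C_i:V\to\mathbb{R}$ given. Size bounds are integers $0\le S_i^\ell\le S_i^u$ with $\sum_iS_i^\ell\le|V|\le\sum_iS_i^u$. For $\gamma=\infty$, the interval $[0,\gamma]$ means $[0,\infty)$. *)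

From HB Require Import structures.
From mathcomp Require Import all_boot all_order all_algebra.
From mathcomp Require Import all_classical all_reals.
From mathcomp Require Import ereal.
Set Implicit Arguments. Unset Strict Implicit. Unset Printing Implicit Defensive.
Import Order.TTheory GRing.Theory Num.Theory.
Local Open Scope ring_scope.

Definition divw {R : realType} {V : finType} (w : V -> V -> R)
  (phi : V -> V -> R) (x : V) : R :=
  2^-1 * \sum_(y : V) w x y * (phi x y - phi y x).

Definition weighted_graph {R : realType} {V : finType} (E : rel V)
  (w : V -> V -> R) : Prop :=
  (forall x y, E x y = E y x) /\
  (forall x y, w x y = w y x) /\
  (forall x y, E x y -> 0 < w x y) /\
  (forall x y, ~~ E x y -> w x y = 0).

Definition in_Sinf {R : realType} {V : finType} (n : nat)
  (q : 'I_n -> V -> V -> R) : Prop :=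
  forall i x y, `|q i x y| <= 1.

(* rho in [0, gamma] (gamma = +oo means [0, oo)) *)
Definition in_box {R : realType} (gamma : \bar R) (r : R) : Prop :=
  0 <= r /\ (r%:E <= gamma)%E.

(* objective of the dual problem (in \bar R; the min over I of n >= 1
   real numbers is finite) *)
Definition dual_obj {R : realType} {V : finType} (n : nat) (w : V -> V -> R)
  (C : 'I_n -> V -> R) (Sl Su : 'I_n -> nat)
  (q : 'I_n -> V -> V -> R) (r1 r2 : 'I_n -> R) : \bar R :=
  ((\sum_(x : V) \big[Order.min/+oo%E]_(i < n)
      (C i x + divw w (q i) x + r2 i - r1 i)%:E)
   + (\sum_(i < n) (r1 i * (Sl i)%:R - r2 i * (Su i)%:R))%:E)%E.

Definition dual_values {R : realType} {V : finType} (n : nat)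
  (w : V -> V -> R) (C : 'I_n -> V -> R) (Sl Su : 'I_n -> nat)
  (gamma : \bar R) : set (\bar R) :=
  [set v | exists q r1 r2, in_Sinf q /\
     (forall i, in_box gamma (r1 i) /\ in_box gamma (r2 i)) /\
     v = dual_obj w C Sl Su q r1 r2].

Definition maxflow_values {R : realType} {V : finType} (n : nat) (E : rel V)
  (w : V -> V -> R) (C : 'I_n -> V -> R) (Sl Su : 'I_n -> nat)
  (gamma : \bar R) : set (\bar R) :=
  [set v | exists (ps : V -> R) (p : 'I_n -> V -> R)
      (q : 'I_n -> V -> V -> R) (r1 r2 : 'I_n -> R),
     (forall i x y, E x y -> `|q i x y| <= 1) /\
     (forall i x, p i x <= C i x) /\
     (forall i x, divw w (q i) x - ps x + p i x = r1 i - r2 i) /\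
     (forall i, in_box gamma (r1 i) /\ in_box gamma (r2 i)) /\
     v = (\sum_(x : V) ps x
          + \sum_(i < n) (r1 i * (Sl i)%:R - r2 i * (Su i)%:R))%:E].

From HB Require Import structures.
From mathcomp Require Import all_boot all_order all_algebra.
From mathcomp Require Import all_classical all_reals.
From mathcomp Require Import ereal.
From mathcomp Require Import lra.
Import Order.TTheory GRing.Theory Num.Theory.
Local Open Scope classical_set_scope.
Local Open Scope ring_scope.

(* The two problems are the same problem written twice.  Given a dual feasible
   point, p_s(x) := min_i (C_i + div q_i + rho^2_i - rho^1_i)(x) and p_i chosen to
   satisfy the flow conservation law give a max-flow point of the same value.
   Conversely, conservation forces p_s(x) <= C_i(x) + div q_i(x) + rho^2_i - rho^1_i
   for every i, so p_s is bounded by the pointwise minimum; the flow q only has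
   to be bounded on edges, but div_w ignores the values of q off edges, so q may
   be replaced by its restriction to E, which lies in S^n_inf. *)

Lemma bigmin_EFin_fin_num (R : realType) (I : finType) (i0 : I) (f : I -> R) :
  (\big[Order.min/+oo%E]_(i : I) (f i)%:E)%E \is a fin_num.
Proof.
rewrite fin_numE; apply/andP; split.
- apply: (big_ind (fun y : \bar R => y != -oo%E)) => // a b a_fin b_fin.
  by rewrite /Order.min; case: ifP.
- by rewrite lt_eqF // (le_lt_trans (bigmin_le _ i0 _)) ?ltey.
Qed.

Lemma divw_edge_restrict (R : realType) (V : finType) (E : rel V)
    (w : V -> V -> R) (phi : V -> V -> R) :
  (forall x y, E x y = E y x) -> (forall x y, ~~ E x y -> w x y = 0) ->
  divw w (fun x y => if E x y then phi x y else 0) = divw w phi.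
Proof.
move=> Esym w0; apply/funext => x; congr (_ * _); apply: eq_bigr => y _.
rewrite (Esym y x); case Exy: (E x y) => //.
by rewrite w0 ?Exy // !mul0r.
Qed.

Section DualMaxflow.
Context {R : realType} {V : finType} {E : rel V} {n : nat}.
Context {w : V -> V -> R} {C : 'I_n -> V -> R} {Sl Su : 'I_n -> nat}.
Context {gamma : \bar R}.

Lemma dual_values_sub_maxflow :
  (0 < n)%N -> dual_values w C Sl Su gamma `<=` maxflow_values E w C Sl Su gamma.
Proof.
move=> n_gt0 _ [q [r1 [r2 [q_Sinf [r_box ->]]]]].
pose i0 : 'I_n := Ordinal n_gt0.
pose m x := (\big[Order.min/+oo%E]_(i < n)
                (C i x + divw w (q i) x + r2 i - r1 i)%:E)%E.
have m_fin x : m x \is a fin_num by exact: bigmin_EFin_fin_num i0 _.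
pose ps x := fine (m x).
have ps_le i x : ps x <= C i x + divw w (q i) x + r2 i - r1 i.
  by rewrite -lee_fin fineK ?m_fin //; apply: bigmin_le.
exists ps, (fun i x => ps x - divw w (q i) x + r1 i - r2 i), q, r1, r2.
split; first by move=> i x y _; apply: q_Sinf.
split; first by move=> i x; have := ps_le i x; lra.
split; first by move=> i x; lra.
split => //; rewrite /dual_obj EFinD -[X in _ = (X + _)%E]sumEFin.
by congr (_ + _)%E; apply: eq_bigr => x _; rewrite /ps fineK ?m_fin.
Qed.

Lemma maxflow_value_le_dual :
  (forall x y, E x y = E y x) -> (forall x y, ~~ E x y -> w x y = 0) ->
  forall v, maxflow_values E w C Sl Su gamma v ->
  exists2 v', dual_values w C Sl Su gamma v' & (v <= v')%E.
Proof.
move=> Esym w0 _ [ps [p [q [r1 [r2 [q_edge [p_le [conserv [r_box ->]]]]]]]]].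
pose qE i x y := if E x y then q i x y else 0.
have div_qE i : divw w (qE i) = divw w (q i) by exact: divw_edge_restrict.
exists (dual_obj w C Sl Su qE r1 r2).
  exists qE, r1, r2; split=> // i x y; rewrite /qE.
  by case: ifP => [/q_edge//|_]; rewrite normr0.
rewrite /dual_obj EFinD -sumEFin leeD2r // lee_sum // => x _.
apply: le_bigmin => [|i _]; first exact: leey.
rewrite lee_fin div_qE; have := p_le i x; have := conserv i x; lra.
Qed.

End DualMaxflow.

Theorem proposition2 (R : realType) (V : finType) (E : rel V)
  (w : V -> V -> R) (n : nat) (C : 'I_n -> V -> R) (Sl Su : 'I_n -> nat)
  (gamma : \bar R) :
  weighted_graph E w ->
  (2 <= n)%N ->
  (forall i, (Sl i <= Su i)%N) ->
  (\sum_(i < n) Sl i <= #|V| <= \sum_(i < n) Su i)%N ->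
  (0 <= gamma)%E ->
  ereal_sup (dual_values w C Sl Su gamma)
  = ereal_sup (maxflow_values E w C Sl Su gamma).
Proof.
move=> [Esym [_ [_ w0]]] n_ge2 _ _ _.
apply: le_anti; apply/andP; split.
- by apply: ereal_sup_le; apply: dual_values_sub_maxflow; exact: leq_trans n_ge2.
- apply: ge_ereal_sup => v /(maxflow_value_le_dual Esym w0) [v' dual_v' le_vv'].
  exact: le_trans le_vv' (ereal_sup_ubound dual_v').
Qed.
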